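(* Let $\mathcal{H}\subseteq\{0,1\}^{\mathcal{X}}$ be a hypothesis class and $\omega_m$ the clique number of $G_m(\mathcal{H})$. Then for all $m\ge1$, $\omega_m\le(2m+1)^{\mathtt{LD}(\mathcal{H})}\le(2m+1)^{\mathtt{CD}(\mathcal{H})}$.
   Context: A dataset of size $m$ is $S=((x_1,y_1),\dots,(x_m,y_m))\in(\mathcal{X}\times\{0,1\})^m$; it is $\mathcal{H}$-realizable if some $h\in\mathcal{H}$ satisfies $h(x_i)=y_i$ for all $i$. $G_m(\mathcal{H})$ is the graph on realizable datasets of size $m$ with $S,S'$ adjacent iff there is $x$ with $(x,0)$ appearing in $S$ and $(x,1)$ appearing in $S'$; $\omega_m$ is its clique number; $\mathtt{CD}(\mathcal{H})=\sup\{m:\omega_m=2^m\}$. A mistake tree is a complete binary tree whose internal nodes are labeled by points of $\mathcal{X}$, each internal node having one outgoing edge labeled $0$ and one labeled $1$; a root-to-leaf path yields the sequence of (node label, edge label) pairs. $\mathcal{H}$ shatters the tree if every root-to-leaf path is realizable by $\mathcal{H}$. $\mathtt{LD}(\mathcal{H})$ is the largest depth of a complete mistake tree shattered by $\mathcal{H}$ ($\infty$ if unbounded). *)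

From mathcomp Require Import all_boot.
From mathcomp Require Import boolp.
Set Implicit Arguments. Unset Strict Implicit. Unset Printing Implicit Defensive.

(* ---------- extended naturals: Some n = n, None = infinity ---------- *)
Definition enat := option nat.

Definition enat_le (a b : enat) : Prop :=
  match a, b with
  | _, None => True
  | None, Some _ => False
  | Some x, Some y => (x <= y)%N
  end.

(* b ^ e for a natural base b and extended exponent e; b ^ oo = oo
   (used only with b = 2m+1 >= 3). *)
Definition epow (b : nat) (e : enat) : enat :=
  match e with Some d => Some (b ^ d)%N | None => None end.

Lemma nsup_ex (P : nat -> Prop) :
  (exists n, forall k, P k -> (k <= n)%N) ->
  exists n, `[< forall k, P k -> (k <= n)%N >].
Proof. by case=> n Hn; exists n; apply: asboolT. Qed.

(* supremum in N ∪ {oo} of a set of naturals; sup of the empty set is 0 *)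
Definition nsup (P : nat -> Prop) : enat :=
  match pselect (exists n, forall k, P k -> (k <= n)%N) with
  | left e => Some (ex_minn (nsup_ex e))
  | right _ => None
  end.

Section Learning.
Variable X : Type.

(* hypothesis class H ⊆ {0,1}^X; label 0 = false, 1 = true *)
Definition hclass := (X -> bool) -> Prop.

Definition dataset (m : nat) := 'I_m -> X * bool.

Definition realizable (H : hclass) m (S : dataset m) : Prop :=
  exists h, H h /\ forall i, h (S i).1 = (S i).2.

Definition adj m (S S' : dataset m) : Prop :=
  exists x, (exists i, S i = (x, false)) /\ (exists j, S' j = (x, true)).

(* a clique of size k in G_m(H): k distinct realizable datasets,
   pairwise adjacent (the graph is undirected) *)
Definition is_clique (H : hclass) m k (C : 'I_k -> dataset m) : Prop :=
  injective C /\ (forall i, realizable H (C i)) /\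
  (forall i j, i <> j -> adj (C i) (C j) \/ adj (C j) (C i)).

Definition omega (H : hclass) m : enat :=
  nsup (fun k => exists C : 'I_k -> dataset m, is_clique H C).

Definition CD (H : hclass) : enat :=
  nsup (fun m => omega H m = Some (2 ^ m)%N).

Inductive mtree : Type :=
| Leaf : mtree
| Node : X -> mtree -> mtree -> mtree.  (* Node x t0 t1: edge 0 to t0, 1 to t1 *)

Fixpoint complete (d : nat) (t : mtree) : Prop :=
  match d, t with
  | 0, Leaf => True
  | d'.+1, Node _ t0 t1 => complete d' t0 /\ complete d' t1
  | _, _ => False
  end.

(* root-to-leaf paths as sequences of (node label, edge label) *)
Fixpoint tpath (t : mtree) (p : seq (X * bool)) : Prop :=
  match t, p with
  | Leaf, [::] => True
  | Node x t0 t1, (x', y) :: p' =>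
      x' = x /\ (if y then tpath t1 p' else tpath t0 p')
  | _, _ => False
  end.

Fixpoint consistent (h : X -> bool) (p : seq (X * bool)) : Prop :=
  match p with
  | [::] => True
  | (x, y) :: p' => h x = y /\ consistent h p'
  end.

Definition shatters (H : hclass) (t : mtree) : Prop :=
  forall p, tpath t p -> exists h, H h /\ consistent h p.

Definition LD (H : hclass) : enat :=
  nsup (fun d => exists t, complete d t /\ shatters H t).

End Learning.

From mathcomp Require Import all_boot boolp unstable.
Set Implicit Arguments. Unset Strict Implicit. Unset Printing Implicit Defensive.

(* If no complete mistake tree of depth d+1 is shattered by
   a class V, then every clique of G_m(V) has at most (2m+1)^d vertices.  By
   induction on d: for every point x one label y(x) is such that the
   restriction V|{h x = y(x)} shatters no tree of depth d (otherwise the two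
   restrictions would shatter the two subtrees of a tree of depth d+1).  Orient
   the clique by letting i -> j when some point x of S_i occurs in S_j with the
   label y(x); each edge of the clique yields an orientation, and the
   out-neighbours of i reached through one of its m points form a clique of a
   restricted class, so out-degrees are at most m(2m+1)^d.  A finite digraph
   containing an arc between any two distinct vertices and of out-degree <= D
   has at most 2D+1 vertices, which gives the bound.

   A shattered complete tree of depth k gives, through its
   2^k root-to-leaf paths, a clique of size 2^k in G_k(H); conversely a family
   of pairwise conflicting partial boolean assignments on k points has at most
   2^k members (they agree with disjoint sets of total assignments, each of
   relative size >= 2^-k).  Hence omega_k = 2^k, so k <= CD(H), i.e. LD <= CD. *)

Lemma nsup_le (P : nat -> Prop) n :
  (forall k, P k -> k <= n) -> enat_le (nsup P) (Some n).
Proof.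
move=> Pn; rewrite /nsup; case: pselect => [e|ne]; last by exfalso; apply: ne; exists n.
by rewrite /=; case: ex_minnP => c _ minc; apply: minc; apply/asboolP.
Qed.

Lemma nsup_ub (P : nat -> Prop) n : nsup P = Some n -> forall k, P k -> k <= n.
Proof. by rewrite /nsup; case: pselect => [e|//] [<-]; case: ex_minnP => c /asboolP. Qed.

Lemma nsup_exact (P : nat -> Prop) n :
  P n -> (forall k, P k -> k <= n) -> nsup P = Some n.
Proof.
move=> Pn ub; rewrite /nsup; case: pselect => [e|ne]; last by exfalso; apply: ne; exists n.
congr Some; case: ex_minnP => c /asboolP ubc minc.
by apply/eqP; rewrite eqn_leq ubc // minc //; apply/asboolP.
Qed.

Lemma nsup_mono (P Q : nat -> Prop) :
  (forall k, P k -> Q k) -> enat_le (nsup P) (nsup Q).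
Proof.
move=> PQ; case Q_eq: (nsup Q) => [c|]; last by case: (nsup P).
by apply: nsup_le => k /PQ; exact: nsup_ub Q_eq k.
Qed.

Lemma epow_mono b (e e' : enat) : 0 < b -> enat_le e e' -> enat_le (epow b e) (epow b e').
Proof.
by move=> b_pos; case: e => [d|]; case: e' => [d'|] //=; exact: leq_pexp2l.
Qed.

Section FiniteCounting.
Variable T : finType.

Definition agree_on (D : {set T}) (g : T -> bool) : {set {ffun T -> bool}} :=
  [set f : {ffun T -> bool} | [forall t in D, f t == g t]].

Lemma card_agree_on D g : #|agree_on D g| = 2 ^ #|~: D|.
Proof.
pose F t : pred bool := if t \in D then pred1 (g t) else predT.
have -> : #|agree_on D g| = #|(family F : simpl_pred {ffun T -> bool})|.
  apply: eq_card => f; rewrite inE; apply/forall_inP/familyP => [fD t|fF t tD].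
    by rewrite /F; case: ifP => // tD; apply: fD.
  by have := fF t; rewrite /F tD.
rewrite card_family foldrE big_map big_enum /= -prod_nat_const [RHS]big_mkcond /=.
by apply: eq_bigr => t _; rewrite /F inE; case: (t \in D); rewrite ?card1 ?card_bool.
Qed.

Lemma conflicting_family_le n k (D : 'I_n -> {set T}) (g : 'I_n -> T -> bool) :
  (forall i, #|D i| <= k) ->
  (forall i j, i != j -> exists2 t, (t \in D i) && (t \in D j) & g i t != g j t) ->
  n <= 2 ^ k.
Proof.
move=> Dk conflict; pose E i := agree_on (D i) (g i).
have unique_agree f : \sum_i (f \in E i) <= 1.
  have [i fi|none] := pickP (fun i => f \in E i); last by rewrite big1 // => i; rewrite none.
  rewrite (bigD1 i) //= fi big1 // => j ji; apply/eqP; rewrite eqb0; apply/negP => fj.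
  have [t /andP [tj ti] gji] := conflict j i ji.
  move: gji fi fj; rewrite !inE => /negP gji /forall_inP /(_ t ti) /eqP fti.
  by move=> /forall_inP /(_ t tj) /eqP ftj; apply: gji; rewrite -fti -ftj.
have sum_le : \sum_i #|E i| <= 2 ^ #|T|.
  rewrite (eq_bigr (fun i => \sum_f (f \in E i))); last first.
    by move=> i _; rewrite -sum1_card big_mkcond.
  rewrite exchange_big /= -[2]card_bool -card_ffun -sum1_card.
  by apply: leq_sum => f _; apply: unique_agree.
have card_ge i : 2 ^ (#|T| - k) <= #|E i|.
  by rewrite card_agree_on leq_pexp2l // leq_subLR -(cardsC (D i)) leq_add2r.
have : n * 2 ^ (#|T| - k) <= 2 ^ (#|T| - k) * 2 ^ k.
  apply: leq_trans (leq_trans _ sum_le) _.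
    rewrite -{1}[n]card_ord -sum_nat_const; apply: leq_sum => i _; exact: card_ge.
  by rewrite -expnD leq_pexp2l // addnC -leq_subLR.
by rewrite mulnC leq_pmul2l // expn_gt0.
Qed.

Lemma tournament_le (A : {set T}) (r : rel T) D :
  (forall i, i \in A -> #|[set j in A | r i j]| <= D) ->
  {in A &, forall i j, i != j -> r i j || r j i} ->
  #|A| <= D.*2.+1.
Proof.
move=> outdeg total; set a := #|A|.
pose S := \sum_(i in A) \sum_(j in A) r i j.
have S_le : S <= a * D.
  rewrite -sum_nat_const; apply: leq_sum => i iA; apply: leq_trans (outdeg i iA).
  rewrite -sum1_card big_mkcond [X in _ <= X]big_mkcond /=; apply: leq_sum => j _.
  by rewrite inE; case: (j \in A); case: (r i j).
have diag : \sum_(i in A) \sum_(j in A) (i == j : nat) = a.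
  rewrite /a -sum1_card; apply: eq_bigr => i iA.
  by rewrite (bigD1 i) //= eqxx big1 // => j /andP [_ /negbTE]; rewrite eq_sym => ->.
have split3 : \sum_(i in A) \sum_(j in A) (r i j + r j i + (i == j)) = S + S + a.
  rewrite -diag /S [X in _ = _ + X + _]exchange_big -!big_split /=.
  by apply: eq_bigr => i _; rewrite -!big_split.
(* every ordered pair (i, j) is counted by r i j, r j i or i == j *)
have sq_le : a * a <= S + S + a.
  rewrite -split3 /a -sum_nat_const; apply: leq_sum => i iA.
  rewrite -sum1_card; apply: leq_sum => j jA.
  have [<-|ij] := eqVneq i j; first by rewrite addn1.
  by rewrite addn0; case/orP: (total i j iA jA ij) => ->; rewrite ?addn1 ?add1n.
have [->|a_pos] := posnP a; first by [].
rewrite -(leq_pmul2l a_pos); apply: leq_trans sq_le _.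
by rewrite mulnS [a + _]addnC leq_add2r -addnn mulnDr leq_add.
Qed.

End FiniteCounting.

Section Shattering.
Variable X : Type.

Definition shattered (V : hclass X) (n : nat) : Prop :=
  exists t : mtree X, complete n t /\ shatters V t.

Definition restrict (V : hclass X) (x : X) (y : bool) : hclass X :=
  fun h => V h /\ h x = y.

Lemma shattered_node V x n :
  shattered (restrict V x false) n -> shattered (restrict V x true) n ->
  shattered V n.+1.
Proof.
move=> [t0 [c0 s0]] [t1 [c1 s1]]; exists (Node x t0 t1); split => //.
move=> [|[x' [|]] p] //= [-> pt].
- by have [h [[Vh hx] hp]] := s1 p pt; exists h.
- by have [h [[Vh hx] hp]] := s0 p pt; exists h.
Qed.

Lemma adj_shattered V m (S S' : dataset X m) :
  realizable V S -> realizable V S' -> adj S S' -> shattered V 1.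
Proof.
move=> [h [Vh hS]] [h' [Vh' hS']] [x [[a Sa] [b S'b]]].
have leaf (y : bool) g : V g -> g x = y -> shattered (restrict V x y) 0.
  by move=> Vg gx; exists (Leaf X); split => // [[|]] //= _; exists g.
apply: shattered_node; [apply: (leaf _ h) | apply: (leaf _ h')] => //.
- by have := hS a; rewrite Sa.
- by have := hS' b; rewrite S'b.
Qed.

(* Cliques in G_m(V) have at most (2m+1)^d vertices when V shatters no tree
   of depth d+1; stated for a subset A of a family to allow the induction. *)
Lemma clique_card_le m d V n (C : 'I_n -> dataset X m) (A : {set 'I_n}) :
  ~ shattered V d.+1 ->
  {in A, forall i, realizable V (C i)} ->
  {in A &, forall i j, i != j -> adj (C i) (C j) \/ adj (C j) (C i)} ->
  #|A| <= (2 * m + 1) ^ d.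
Proof.
elim: d V A => [|d IH] V A noV real clique.
  rewrite expn0 leqNgt; apply/negP => /card_gt1P [i [j [iA jA ij]]].
  by apply: noV; case: (clique i j iA jA ij); apply: adj_shattered; apply: real.
have /choice [y noVy] x : exists y, ~ shattered (restrict V x y) d.+1.
  have [Vx0|] := pselect (shattered (restrict V x false) d.+1); last by exists false.
  by exists true => Vx1; apply: noV; exact: shattered_node Vx0 Vx1.
pose hit i p j := exists q, C j q = ((C i p).1, y (C i p).1).
pose G i p := [set j in A | `[< hit i p j >]].
(* the datasets hitting a fixed point are realizable by a restriction *)
have G_le i p : #|G i p| <= (2 * m + 1) ^ d.
  apply: (IH _ _ (noVy (C i p).1)).
  - move=> j; rewrite inE => /andP [jA /asboolP [q Cjq]].
    have [h [Vh hC]] := real j jA; exists h; split => //; split => //.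
    by have := hC q; rewrite Cjq.
  - by move=> j j'; rewrite !inE => /andP [jA _] /andP [j'A _]; apply: clique.
pose out i j := `[< exists p, hit i p j >].
have out_le i : i \in A -> #|[set j in A | out i j]| <= m * (2 * m + 1) ^ d.
  move=> _; apply: (@leq_trans #|\bigcup_(p < m) G i p|).
    apply/subset_leq_card/subsetP => j; rewrite inE => /andP [jA /asboolP [p hp]].
    by apply/bigcupP; exists p => //; rewrite inE jA; apply/asboolP.
  apply: leq_trans (card_big_setU _ _ _) _.
  apply: (@leq_trans (\sum_(p < m) (2 * m + 1) ^ d)); first exact: leq_sum.
  by rewrite sum_nat_const card_ord.
have out_adj i j : adj (C i) (C j) -> out i j || out j i.
  move=> [x [[a Ca] [b Cb]]]; apply/orP; case yx: (y x); [left | right]; apply/asboolP.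
  - by exists a, b; rewrite Ca Cb /= yx.
  - by exists b, a; rewrite Ca Cb /= yx.
have total : {in A &, forall i j, i != j -> out i j || out j i}.
  by move=> i j iA jA ij; case: (clique i j iA jA ij) => /out_adj //; rewrite orbC.
apply: leq_trans (tournament_le out_le total) _.
by rewrite expnS mulnDl mul1n -mulnA -mul2n -addn1 leq_add2l expn_gt0 addn1.
Qed.
End Shattering.

Section Paths.
Variable X : Type.
(* Points carry a classical decidable equality, to compare path labels. *)
Local Notation Y := {classic X}.

Fixpoint pathOf (t : mtree X) (bs : seq bool) : seq (Y * bool) :=
  match t, bs with
  | Node x t0 t1, b :: bs' => (x, b) :: pathOf (if b then t1 else t0) bs'
  | _, _ => [::]
  end.

Lemma pathOf_tpath k t bs : complete k t -> size bs = k ->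
  tpath t (pathOf t bs) /\ size (pathOf t bs) = k.
Proof.
elim: k t bs => [|k IH] [|x t0 t1] [|b bs] //= ct [sz].
by case: b; [have [tp ->] := IH t1 bs ct.2 sz | have [tp ->] := IH t0 bs ct.1 sz].
Qed.

Lemma pathOf_conflict k t bs bs' : complete k t -> size bs = k -> size bs' = k ->
  bs != bs' -> exists x b, (x, b) \in pathOf t bs /\ (x, ~~ b) \in pathOf t bs'.
Proof.
elim: k t bs bs' => [|k IH] [|x t0 t1] [|b bs] [|b' bs'] //= ct [sz] [sz'].
rewrite eqseq_cons; have [<-|bb'] /= := eqVneq b b' => [ne|_].
  have ct' : complete k (if b then t1 else t0) by case: (b); [exact: ct.2 | exact: ct.1].
  have [y [c [yc yc']]] := IH _ _ _ ct' sz sz' ne.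
  by exists y, c; rewrite !in_cons yc yc' !orbT.
have -> : b' = ~~ b by move: bb'; case: (b); case: (b').
by exists x, b; rewrite !in_cons !eqxx.
Qed.

Lemma consistent_mem (h : X -> bool) (p : seq (Y * bool)) :
  consistent h p -> forall q, q \in p -> h q.1 = q.2.
Proof.
elim: p => [//|[y c] p IH] /= [hy hp] q; rewrite in_cons => /orP [/eqP -> //|].
exact: IH.
Qed.

Lemma realizable_not_self_adj (H : hclass X) m (S : dataset X m) :
  realizable H S -> ~ adj S S.
Proof.
move=> [h [_ hS]] [x [[a Sa] [b Sb]]].
by have := hS a; have := hS b; rewrite Sa Sb /= => ->.
Qed.

(* omega_k <= 2^k: a clique of G_k(H) is a family of pairwise conflicting
   assignments on the finitely many points occurring in it. *)
Lemma clique_le_pow2 (H : hclass X) k n (C : 'I_n -> dataset X k) :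
  (forall i, realizable H (C i)) ->
  (forall i j, i <> j -> adj (C i) (C j) \/ adj (C j) (C i)) ->
  n <= 2 ^ k.
Proof.
move=> /choice [h hC] clique.
pose U : seq Y := [seq (C i p).1 | i <- enum 'I_n, p <- enum 'I_k].
have memU i p : ((C i p).1 : Y) \in U by apply/allpairsP; exists (i, p); rewrite !mem_enum.
pose pt i p : seq_sub U := SeqSub (memU i p).
pose D i := [set pt i p | p : 'I_k].
have witness i j : adj (C i) (C j) ->
    exists2 t, (t \in D i) && (t \in D j) & h i (val t) != h j (val t).
  move=> [x [[a Ca] [b Cb]]]; have ptab : pt i a = pt j b by apply: val_inj; rewrite /= Ca Cb.
  exists (pt i a); first by rewrite {2}ptab !imset_f.
  have hix : h i x = false by have := (hC i).2 a; rewrite Ca.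
  have hjx : h j x = true by have := (hC j).2 b; rewrite Cb.
  by rewrite /= Ca /= hix hjx.
apply: (conflicting_family_le (D := D) (g := fun i t => h i (val t))).
  by move=> i; apply: leq_trans (leq_imset_card _ _) _; rewrite card_ord.
move=> i j /eqP ij; case: (clique i j ij) => /witness // [t tij gij].
by exists t; rewrite 1?andbC 1?eq_sym.
Qed.

Lemma shattered_clique (H : hclass X) k :
  shattered H k -> exists C : 'I_(2 ^ k) -> dataset X k, is_clique H C.
Proof.
move=> [t [ct sh]].
have card_bits : #|{: k.-tuple bool}| = 2 ^ k by rewrite card_tuple card_bool.
pose bits (j : 'I_(2 ^ k)) : k.-tuple bool := enum_val (cast_ord (esym card_bits) j).
have bits_inj : injective bits by move=> j j' /enum_val_inj /cast_ord_inj.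
pose p j := pathOf t (bits j).
have p_spec j : tpath t (p j) /\ size (p j) = k := pathOf_tpath ct (size_tuple _).
pose p_tuple j : k.-tuple (Y * bool) := Tuple (introT eqP (p_spec j).2).
pose C j : dataset X k := tnth (p_tuple j).
have memC j x b : (x, b) \in p j -> exists i, C j i = (x, b).
  by move=> /(tnthP (p_tuple j)) [i ->]; exists i.
have real j : realizable H (C j).
  have [h [Hh hp]] := sh _ (p_spec j).1; exists h; split => // i.
  exact/(consistent_mem hp)/(mem_tnth i (p_tuple j)).
have clique j j' : j != j' -> adj (C j) (C j') \/ adj (C j') (C j).
  move=> jj'; have bb' : bits j != bits j' by apply: contra jj' => /eqP/bits_inj ->.
  have [x [[|] [xj xj']]] := pathOf_conflict ct (size_tuple _) (size_tuple _) bb'.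
  - by right; exists x; split; [apply: memC xj' | apply: memC xj].
  - by left; exists x; split; [apply: memC xj | apply: memC xj'].
exists C; split; last by split => // j j' /eqP; apply: clique.
move=> j j' Cjj'; apply/eqP; apply: contraT => jj'.
by exfalso; case: (clique j j' jj'); rewrite Cjj'; apply: realizable_not_self_adj (real j').
Qed.

Lemma omega_shattered (H : hclass X) k : shattered H k -> omega H k = Some (2 ^ k).
Proof.
move=> shk; apply: nsup_exact; first exact: shattered_clique shk.
by move=> n [C [_ [real clique]]]; apply: clique_le_pow2 real clique.
Qed.

End Paths.

Theorem mainTheorem11 (X : Type) (H : hclass X) (m : nat) :
  (1 <= m)%N ->
  enat_le (omega H m) (epow (2 * m + 1) (LD H)) /\
  enat_le (epow (2 * m + 1) (LD H)) (epow (2 * m + 1) (CD H)).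
Proof.
move=> _; split.
- case LD_eq: (LD H) => [d|] /=; last by case: (omega H m).
  have noH : ~ shattered H d.+1 by move=> /(nsup_ub LD_eq); rewrite ltnn.
  apply: nsup_le => n [C [_ [real clique]]].
  rewrite -[n]card_ord -cardsT; apply: (clique_card_le noH) => // i j _ _ /eqP.
  exact: clique.
- apply: epow_mono; first by rewrite addn1.
  by apply: nsup_mono => k /omega_shattered.
Qed.
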